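(* Let $X$ be a random variable with values in $\{x_1,\ldots,x_N\}$. Let $A\geq16$ be such that $\mathbb{P}[X=x_i]\geq\frac1A$ for all $i\in[N]$. Let $J\subseteq\{x_1,\ldots,x_N\}$ and let $\mathcal{E}$ be the event that $X\in J$. Suppose $\mathbb{P}[\mathcal{E}]\geq1-a$ for some $0\leq a\leq\frac12$. Then $H(X)-H(X\mid\mathcal{E})\leq 2a\log A$.
   Context: $\log=\log_2$. For a discrete random variable $X$ with outcomes $x_1,\dots,x_N$ and $p_i=\mathbb{P}[X=x_i]$, $H(X)=-\sum_i p_i\log p_i$ (with $0\log0:=0$). For an event $\mathcal{E}$ of positive probability and $p_i'=\mathbb{P}[X=x_i\mid\mathcal{E}]$, $H(X\mid\mathcal{E})=-\sum_i p_i'\log p_i'$. *)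

From mathcomp Require Import all_boot all_order all_algebra.
From mathcomp Require Import reals exp.
Set Implicit Arguments. Unset Strict Implicit. Unset Printing Implicit Defensive.
Import Order.TTheory GRing.Theory Num.Theory.
Local Open Scope ring_scope.

Definition log2 {R : realType} (x : R) : R := ln x / ln 2.

Definition xlog2x {R : realType} (x : R) : R := if x == 0 then 0 else x * log2 x.

(* Shannon entropy of a distribution p on outcomes 'I_N (p i = P[X = x_i]) *)
Definition entropy {R : realType} {N : nat} (p : 'I_N -> R) : R :=
  - \sum_(i < N) xlog2x (p i).

Definition probE {R : realType} {N : nat} (p : 'I_N -> R) (J : {set 'I_N}) : R :=
  \sum_(i in J) p i.

Definition condp {R : realType} {N : nat} (p : 'I_N -> R) (J : {set 'I_N})
  (i : 'I_N) : R := if i \in J then p i / probE p J else 0.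

Definition cond_entropy {R : realType} {N : nat} (p : 'I_N -> R) (J : {set 'I_N}) : R :=
  entropy (condp p J).

(* The entropy of X exceeds that of X given E only through the mass of the
   complement of E: writing q = P[E] and using natural logarithms,
     ln 2 * (H(X) - H(X | E))
       = (1/q - 1) * sum_(J) p ln p - sum_(not J) p ln p - ln q.
   The first term is nonpositive, the second is at most (1 - q) ln A because
   every p_i >= 1/A, and -ln q <= 2 (1 - q) because q >= 1/2; finally
   1 - q <= a and 2 <= ln A since A >= 16. *)
From mathcomp Require Import all_boot all_order all_algebra.
From mathcomp Require Import reals exp.
From mathcomp Require Import ring lra.
Set Implicit Arguments. Unset Strict Implicit. Unset Printing Implicit Defensive.
Import Order.TTheory GRing.Theory Num.Theory.
Local Open Scope ring_scope.

Section LnBounds.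
Variable R : realType.
Implicit Types x A : R.

Lemma ln_ge1Bv x : 0 < x -> 1 - x^-1 <= ln x.
Proof.
move=> x_gt0; rewrite -[ln x]opprK -lnV ?posrE // lerNr opprB.
have := @le_ln1Dx R (x^-1 - 1); rewrite [1 + _]addrC subrK; apply.
by rewrite ltrBrDl addrN invr_gt0.
Qed.

Lemma ln2_gt0 : 0 < ln (2 : R).
Proof. by rewrite ln_gt0 // ltr1n. Qed.

Lemma ln_ge2 A : 16 <= A -> 2 <= ln A.
Proof.
move=> A_ge16; have ln2_ge : 2^-1 <= ln (2 : R).
  by have := @ln_ge1Bv 2 (ltr0Sn _ _); lra.
have ln16 : ln (16 : R) = ln 2 *+ 4 by rewrite -lnXn // -natrX.
apply: (@le_trans _ _ (ln 16)); last by rewrite ler_ln ?posrE; lra.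
by rewrite ln16 -[_ *+ 4]mulr_natl; lra.
Qed.

Lemma ln_ge_2subr1 x : 2^-1 <= x <= 1 -> 2 * (x - 1) <= ln x.
Proof.
case/andP=> x_ge x_le1; have x_gt0 : 0 < x by lra.
apply: (@le_trans _ _ (1 - x^-1)); last exact: ln_ge1Bv.
have xVx : x^-1 * x = 1 by rewrite mulVf // gt_eqF.
have xV_le2 : x^-1 <= 2 by rewrite -[2](invrK 2) lef_pV2 ?posrE //; lra.
nra.
Qed.

Lemma xlnx_le0 x : 0 <= x <= 1 -> x * ln x <= 0.
Proof. by case/andP=> x_ge0 x_le1; rewrite mulr_ge0_le0 // ln_le0. Qed.

Lemma oppr_xlnx_le x A : 0 < A -> A^-1 <= x -> - (x * ln x) <= x * ln A.
Proof.
move=> A_gt0 x_ge.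
have x_gt0 : 0 < x by apply: lt_le_trans x_ge; rewrite invr_gt0.
rewrite -mulrN ler_pM2l // -lnV ?posrE // ler_ln ?posrE ?invr_gt0 //.
by rewrite -[A]invrK lef_pV2 ?posrE ?invr_gt0.
Qed.

Lemma xlnx_div x y : 0 <= x -> 0 < y ->
  x / y * ln (x / y) = (x * ln x - x * ln y) / y.
Proof.
move=> x_ge0 y_gt0; have [->|x_neq0] := eqVneq x 0.
  by rewrite !mul0r subrr mul0r.
have x_gt0 : 0 < x by rewrite lt0r x_neq0.
by rewrite ln_div ?posrE // -mulrBr mulrAC.
Qed.

End LnBounds.

Section Entropy.
Variables (R : realType) (N : nat).

Lemma xlog2xE (x : R) : xlog2x x = x * ln x / ln 2.
Proof. by rewrite /xlog2x /log2; case: eqP => [->|_]; rewrite ?mul0r ?mulrA. Qed.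

Lemma entropyE (p : 'I_N -> R) : entropy p = - (\sum_i p i * ln (p i)) / ln 2.
Proof.
by rewrite /entropy (eq_bigr _ (fun i _ => xlog2xE _)) -mulr_suml mulNr.
Qed.

Variable p : 'I_N -> R.
Hypothesis p_ge0 : forall i, 0 <= p i.

Lemma probE_ge0 J : 0 <= probE p J.
Proof. exact: sumr_ge0. Qed.

Lemma probEC J : \sum_i p i = 1 -> probE p (~: J) = 1 - probE p J.
Proof.
move=> p_sum1; rewrite -p_sum1 (bigID (mem J)) /= addrC addrK.
by apply: eq_bigl => i; rewrite in_setC.
Qed.

Lemma probE_le1 J : \sum_i p i = 1 -> probE p J <= 1.
Proof.
by move=> p_sum1; have := probE_ge0 (~: J); rewrite probEC // subr_ge0.
Qed.

Lemma prob_le1 i : \sum_i p i = 1 -> p i <= 1.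
Proof.
by move=> p_sum1; have := probE_le1 [set i] p_sum1; rewrite /probE big_set1.
Qed.

Lemma cond_entropyE J : 0 < probE p J ->
  cond_entropy p J
  = - ((\sum_(i in J) p i * ln (p i)) / probE p J - ln (probE p J)) / ln 2.
Proof.
set q := probE p J => q_gt0; rewrite /cond_entropy entropyE (bigID (mem J)) /=.
rewrite [X in _ + X]big1 ?addr0 => [|i /negPf iNJ]; last first.
  by rewrite /condp iNJ mul0r.
under eq_bigr => i iJ do rewrite /condp iJ xlnx_div //.
rewrite -mulr_suml sumrB -mulr_suml -/(probE p J) -/q.
by field; rewrite !gt_eqF ?ln2_gt0.
Qed.

Lemma entropy_sub_cond_entropy J : 0 < probE p J ->
  entropy p - cond_entropy p J
  = (((probE p J)^-1 - 1) * \sum_(i in J) p i * ln (p i)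
     - \sum_(i in ~: J) p i * ln (p i) - ln (probE p J)) / ln 2.
Proof.
move=> q_gt0; rewrite entropyE cond_entropyE // (bigID (mem J)) /=.
have -> : \sum_(i | i \notin J) p i * ln (p i) = \sum_(i in ~: J) p i * ln (p i).
  by apply: eq_bigl => i; rewrite in_setC.
by field; rewrite !gt_eqF ?ln2_gt0.
Qed.

Lemma sum_xlnx_le0 (J : {set 'I_N}) :
  (forall i, p i <= 1) -> \sum_(i in J) p i * ln (p i) <= 0.
Proof.
move=> p_le1; rewrite -oppr_ge0 -sumrN; apply: sumr_ge0 => i _.
by rewrite oppr_ge0 xlnx_le0 // p_ge0 p_le1.
Qed.

Lemma oppr_sum_xlnx_le (J : {set 'I_N}) A :
  0 < A -> (forall i, A^-1 <= p i) ->
  - \sum_(i in J) p i * ln (p i) <= probE p J * ln A.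
Proof.
move=> A_gt0 p_ge; rewrite -sumrN /probE mulr_suml.
by apply: ler_sum => i _; apply: oppr_xlnx_le.
Qed.

End Entropy.

Theorem lemma3p1 (R : realType) (N : nat) (p : 'I_N -> R) (A a : R)
  (J : {set 'I_N})
  (hp0 : forall i, 0 <= p i)
  (hp1 : \sum_(i < N) p i = 1)
  (hA : 16 <= A)
  (hpA : forall i, A^-1 <= p i)
  (ha0 : 0 <= a) (ha1 : a <= 2^-1)
  (hE : 1 - a <= probE p J) :
  entropy p - cond_entropy p J <= 2 * a * log2 A.
Proof.
have A_gt0 : 0 < A by lra.
set q := probE p J in hE *.
have q_le1 : q <= 1 by apply: probE_le1.
have q_gt0 : 0 < q by lra.
rewrite entropy_sub_cond_entropy // -/q /log2 mulrA.
rewrite ler_pM2r ?invr_gt0 ?ln2_gt0 //.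
have inJ_le0 : (q^-1 - 1) * \sum_(i in J) p i * ln (p i) <= 0.
  rewrite mulr_ge0_le0 ?subr_ge0 ?invf_ge1 //.
  by apply: sum_xlnx_le0 => // i; apply: prob_le1.
have notinJ_le := oppr_sum_xlnx_le (~: J) A_gt0 hpA.
rewrite probEC // -/q in notinJ_le.
have lnq_ge : 2 * (q - 1) <= ln q by apply: ln_ge_2subr1; lra.
have lnA_ge2 : 2 <= ln A by apply: ln_ge2.
have notinJ_le_a : (1 - q) * ln A <= a * ln A by rewrite ler_wpM2r //; lra.
have a2_le : 2 * a <= a * ln A by rewrite mulrC ler_wpM2l.
lra.
Qed.
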